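(* Let $a\geq 2$ and $0\leq b<a$ be integers, and let $\mathbb{L}$ be a skew field. Let $B$ be a $b$-space of $\mathrm{PG}(a,\mathbb{L})$, let $B_1,B_2$ be subspaces of $\mathrm{PG}(a,\mathbb{L})$ of dimension at most $b-1$, and let $B_3$ be a subspace of dimension at most $b-2$ (if $b=0$, $B_3$ is the empty subspace). Then there exists an $(a-b-1)$-space $C$ of $\mathrm{PG}(a,\mathbb{L})$ that is disjoint from $B\cup B_1\cup B_2\cup B_3$ (i.e. shares no point with it).
   Context: $\mathrm{PG}(a,\mathbb{L})$ is the projective space of an $(a+1)$-dimensional vector space over $\mathbb{L}$; an $m$-space is an $(m+1)$-dimensional vector subspace, viewed as its set of points ($1$-dimensional subspaces); the empty subspace has dimension $-1$. *)

From mathcomp Require Import all_boot all_algebra.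
Set Implicit Arguments. Unset Strict Implicit. Unset Printing Implicit Defensive.
Import GRing.Theory.
Local Open Scope ring_scope.

Definition skew_field (L : unitRingType) : Prop :=
  forall x : L, x != 0 -> x \is a GRing.unit.

Definition in_span (L : pzRingType) (V : lmodType L) (k : nat)
  (f : 'I_k -> V) (v : V) : Prop :=
  exists c : 'I_k -> L, v = \sum_(i < k) c i *: f i.

Definition free_family (L : pzRingType) (V : lmodType L) (k : nat)
  (f : 'I_k -> V) : Prop :=
  forall c : 'I_k -> L, \sum_(i < k) c i *: f i = 0 -> forall i, c i = 0.

(* A projective m-space of
   PG(a,L) is a vector subspace of L^(a+1) of vector dimension m+1; the
   empty projective subspace (dimension -1) is the zero vector subspace
   (vector dimension 0). A point of the projective subspace S is a
   1-dimensional vector subspace contained in S, so two projective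
   subspaces share no point iff their vector subspaces meet only in 0. *)
Definition vsub_of_dim (L : pzRingType) (V : lmodType L) (S : V -> Prop)
  (k : nat) : Prop :=
  exists f : 'I_k -> V, free_family f /\ forall v, S v <-> in_span f v.

From mathcomp Require Import all_boot all_algebra zify.
Set Implicit Arguments. Unset Strict Implicit. Unset Printing Implicit Defensive.
Import GRing.Theory.
Local Open Scope ring_scope.

(* The (a-b)-dimensional vector space C is built one vector at a time: with C'
   already built, the next vector v must avoid B + C', of codimension >= 1, and
   the B_k + C', of dimension <= a - 1 in L^(a+1).  Over a small skew field
   proper subspaces can cover the space, so a count is needed.  Give an affine
   subspace of dimension d the weight 2^d; affine subspaces of total weight
   < 2^n do not cover L^n, because each one either meets at most one of the
   hyperplanes x_0 = 0, x_0 = 1 or meets both in half its weight, so one of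
   these hyperplanes carries total weight < 2^(n-1).  B + C' is avoided by
   taking v in an affine hyperplane phi = 1 with phi vanishing on B + C'; there
   the B_k + C' have total weight at most 3 * 2^(a-2) < 2^a. *)

Lemma size_index_enum_ord m : size (index_enum 'I_m) = m.
Proof. by rewrite -sum1_size sum1_card card_ord. Qed.

Lemma exp2_budget a b k j :
  (k <= b)%N -> (j < a - b)%N -> (2 ^ (k + j) * 4 <= 2 ^ a.+1)%N.
Proof. by move=> hk hj; rewrite -(expnD 2 _ 2) leq_exp2l //; lia. Qed.

Section SkewLinearAlgebra.
Variable L : unitRingType.
Local Notation vec n := 'rV[L]_n.

Fixpoint spanned n (s : seq (vec n)) (v : vec n) : Prop :=
  if s is u :: s' then exists a, spanned s' (v - a *: u) else v = 0.

Lemma spanned0 n (s : seq (vec n)) : spanned s 0.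
Proof. by elim: s => [|u s IH] //=; exists 0; rewrite scale0r subr0. Qed.

Lemma spannedZ n (s : seq (vec n)) a v : spanned s v -> spanned s (a *: v).
Proof.
elim: s v => [|u s IH] v /=; first by move->; rewrite scaler0.
by case=> b hb; exists (a * b); rewrite -scalerA -scalerBr; apply: IH.
Qed.

Lemma spanned_cat n (s t : seq (vec n)) v w :
  spanned s v -> spanned t w -> spanned (s ++ t) (v + w).
Proof.
elim: s v => [|u s IH] v /=; first by move-> => hw; rewrite add0r.
by case=> a ha hw; exists a; rewrite addrAC; apply: IH.
Qed.

Lemma spanned_map n m (F : vec n -> vec m) (s : seq (vec n)) v :
  linear F -> spanned s v -> spanned (map F s) (F v).
Proof.
move=> hF; elim: s v => [|u s IH] v /=.
  by move->; rewrite -(subrr 0) (zmod_morphism_linear hF) subrr.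
case=> a ha; exists a; move: (IH _ ha).
by rewrite -scaleNr addrC hF scaleNr addrC.
Qed.

Lemma spanned_sum n (I : Type) (r : seq I) (f : I -> vec n) (c : I -> L) :
  spanned (map f r) (\sum_(i <- r) c i *: f i).
Proof.
elim: r => [|i r IH] /=; first by rewrite big_nil.
by exists (c i); rewrite big_cons addrAC subrr add0r.
Qed.

Lemma in_span_spanned k n (f : 'I_k -> vec n) v :
  in_span f v -> spanned (map f (index_enum 'I_k)) v.
Proof. by case=> c ->; apply: spanned_sum. Qed.

Definition lform n (phi : 'I_n -> L) (x : vec n) : L := \sum_j x 0 j * phi j.

Lemma lform_scalar n (phi : 'I_n -> L) : scalar (lform phi).
Proof.
move=> a x y; rewrite /lform mulr_sumr -big_split /=; apply: eq_bigr => j _.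
by rewrite !mxE mulrDl mulrA.
Qed.

Lemma lformB n (phi : 'I_n -> L) x y : lform phi (x - y) = lform phi x - lform phi y.
Proof. by rewrite -scaleN1r addrC lform_scalar mulN1r addrC. Qed.

Lemma lform0 n (phi : 'I_n -> L) : lform phi 0 = 0.
Proof. by rewrite -(subrr 0) lformB subrr. Qed.

Lemma lformZ n (phi : 'I_n -> L) a x : lform phi (a *: x) = a * lform phi x.
Proof. by rewrite -[a *: x]addr0 lform_scalar -(subrr 0) lformB subrr addr0. Qed.

Lemma lformD n (phi : 'I_n -> L) x y : lform phi (x + y) = lform phi x + lform phi y.
Proof. by have := lform_scalar phi 1 x y; rewrite scale1r mul1r. Qed.

Lemma lform_spanned n (phi : 'I_n -> L) (s : seq (vec n)) v :
  {in s, forall x, lform phi x = 0} -> spanned s v -> lform phi v = 0.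
Proof.
elim: s v => [|u s IH] v s0 /=; first by move->; apply: lform0.
case=> a ha; have s0' : {in s, forall x, lform phi x = 0}.
  by move=> x hx; apply: s0; rewrite inE hx orbT.
by move: (IH _ s0' ha); rewrite lformB lformZ (s0 u) ?mem_head // mulr0 subr0.
Qed.

Lemma lform_split n (phi : 'I_n.+1 -> L) i x :
  lform phi x = x 0 i * phi i + \sum_j x 0 (lift i j) * phi (lift i j).
Proof. by rewrite /lform (bigD1_ord i). Qed.

Definition kernel_lift n (phi : 'I_n.+1 -> L) (i : 'I_n.+1) (w : vec n) : vec n.+1 :=
  \row_j if unlift i j is Some j' then w 0 j'
         else - (\sum_j' w 0 j' * phi (lift i j')) * (phi i)^-1.

Lemma col'_kernel_lift n (phi : 'I_n.+1 -> L) i w : col' i (kernel_lift phi i w) = w.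
Proof. by apply/rowP => j; rewrite !mxE liftK. Qed.

Lemma lform_kernel_lift n (phi : 'I_n.+1 -> L) i w :
  phi i \is a GRing.unit -> lform phi (kernel_lift phi i w) = 0.
Proof.
move=> hu; rewrite (lform_split _ i) !mxE unlift_none divrK //.
rewrite addrC; apply/eqP; rewrite subr_eq0; apply/eqP.
by apply: eq_bigr => j _; rewrite mxE liftK.
Qed.

Definition level_point n (phi : 'I_n -> L) (i : 'I_n) (t : L) : vec n :=
  (t * (phi i)^-1) *: delta_mx 0 i.

Lemma lform_level_point n (phi : 'I_n.+1 -> L) i t :
  phi i \is a GRing.unit -> lform phi (level_point phi i t) = t.
Proof.
move=> hu; rewrite lformZ (lform_split _ i) big1 ?addr0 => [|j _].
  by rewrite mxE !eqxx mul1r divrK.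
by rewrite mxE eqxx eq_sym (negbTE (neq_lift _ _)) mul0r.
Qed.

Definition kerproj n (phi : 'I_n -> L) (u x : vec n) : vec n :=
  x - (lform phi x * (lform phi u)^-1) *: u.

Lemma kerproj_linear n (phi : 'I_n -> L) u : linear (kerproj phi u).
Proof.
move=> a x y; rewrite /kerproj lform_scalar mulrDl scalerDl scalerBr scalerA mulrA.
by rewrite opprD addrACA.
Qed.

Lemma kerprojK n (phi : 'I_n -> L) u x :
  lform phi x = 0 -> kerproj phi u x = x.
Proof. by move=> x0; rewrite /kerproj x0 mul0r scale0r subr0. Qed.

Lemma kerproj_pivot n (phi : 'I_n -> L) u :
  lform phi u \is a GRing.unit -> kerproj phi u u = 0.
Proof. by move=> hu; rewrite /kerproj mulrV // scale1r subrr. Qed.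

Lemma lform_kerproj n (phi : 'I_n -> L) u x :
  lform phi u \is a GRing.unit -> lform phi (kerproj phi u x) = 0.
Proof. by move=> hu; rewrite lformB lformZ divrK // subrr. Qed.

Lemma col'_linear n (i : 'I_n.+1) : linear (@col' L 1 n.+1 i).
Proof. by move=> a x y; apply/rowP => j; rewrite !mxE. Qed.

Definition transversal n (phi : 'I_n -> L) (g : seq (vec n)) :=
  has (fun x => lform phi x != 0) g.

Definition pivot n (phi : 'I_n -> L) (g : seq (vec n)) :=
  nth 0 g (find (fun x => lform phi x != 0) g).

(* The affine subspace [c.1 + <c.2>] meets the hyperplane [lform phi = t] in an
   affine subspace; [slice] returns it in the coordinates [w] of the
   parametrisation [w |-> level_point phi i t + kernel_lift phi i w] of that
   hyperplane, or [None] when the two are disjoint. *)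
Definition slice n (phi : 'I_n.+1 -> L) (i : 'I_n.+1) (t : L)
    (c : vec n.+1 * seq (vec n.+1)) : option (vec n * seq (vec n)) :=
  let q := level_point phi i t - c.1 in
  if transversal phi c.2 then
    let F := col' i \o kerproj phi (pivot phi c.2) in Some (- F q, map F c.2)
  else if lform phi c.1 == t then Some (- col' i q, map (col' i) c.2) else None.

Hypothesis HL : skew_field L.

Lemma pivotP n (phi : 'I_n -> L) g : transversal phi g ->
  pivot phi g \in g /\ lform phi (pivot phi g) \is a GRing.unit.
Proof.
move=> hg; split; first by apply: mem_nth; rewrite -has_find.
by apply: HL; apply: (nth_find 0 hg).
Qed.

Lemma slice_spec n (phi : 'I_n.+1 -> L) i t c w : phi i \is a GRing.unit ->
  spanned c.2 (level_point phi i t + kernel_lift phi i w - c.1) ->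
  exists2 c', slice phi i t c = Some c' & spanned c'.2 (w - c'.1).
Proof.
case: c => p g hu /=; set q := level_point phi i t - p.
rewrite addrAC addrC -/q /slice /= -/q => hs; case: ifP => hg.
  have [_ hu'] := pivotP hg; set F := _ \o _.
  have linF : linear F by move=> a x y; rewrite /F /= kerproj_linear col'_linear.
  eexists; first reflexivity; move: (spanned_map linF hs).
  rewrite opprK (GRing.semilinear_linear linF).2 /F /=.
  by rewrite kerprojK ?col'_kernel_lift ?lform_kernel_lift.
have hs0 : lform phi (kernel_lift phi i w + q) = 0.
  apply: lform_spanned hs => x hx; apply/eqP; apply: contraFT hg => hx0.
  by apply/hasP; exists x.
move: hs0; rewrite lformD lform_kernel_lift // add0r lformB lform_level_point // => /eqP.
rewrite subr_eq0 eq_sym => ->; eexists; first reflexivity.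
have lin_col' := @col'_linear n i.
move: (spanned_map lin_col' hs).
by rewrite opprK (GRing.semilinear_linear lin_col').2 col'_kernel_lift.
Qed.

(* Nonzero generators are counted, so that [2 ^ dim <= weight]. *)
Definition weight n (g : seq (vec n)) : nat := 2 ^ count (fun x => x != 0) g.

Definition oweight n (o : option (vec n * seq (vec n))) : nat :=
  if o is Some c then weight c.2 else 0.

Lemma weight_map n m (F : vec n -> vec m) g : F 0 = 0 ->
  (weight (map F g) <= weight g)%N.
Proof.
move=> F0; rewrite /weight leq_exp2l // count_map; apply: sub_count => x /=.
by apply: contraNN => /eqP ->; rewrite F0.
Qed.

Lemma weight_map_kill n m (F : vec n -> vec m) g u :
  F 0 = 0 -> u \in g -> u != 0 -> F u = 0 -> (weight (map F g) * 2 <= weight g)%N.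
Proof.
move=> F0 ug u0 Fu; rewrite /weight -expnSr leq_exp2l // count_map.
rewrite !(permP (perm_to_rem ug)) /= Fu eqxx u0 add0n add1n ltnS.
by apply: sub_count => x /=; apply: contraNN => /eqP ->; rewrite F0.
Qed.

Lemma sum_weight_pmap n m (f : vec n * seq (vec n) -> option (vec m * seq (vec m))) cs :
  (\sum_(c <- pmap f cs) weight c.2 = \sum_(c <- cs) oweight (f c))%N.
Proof.
elim: cs => [|c cs IH] /=; first by rewrite !big_nil.
by rewrite big_cons; case: (f c) => [c'|] /=; rewrite ?big_cons IH.
Qed.

Lemma slice_weight_transversal n (phi : 'I_n.+1 -> L) i t c :
  transversal phi c.2 -> (oweight (slice phi i t c) * 2 <= weight c.2)%N.
Proof.
move=> hg; have [pg hu] := pivotP hg; rewrite /slice hg /=.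
apply: (weight_map_kill _ pg) => /=.
- by rewrite kerprojK ?lform0 // raddf0.
- by apply: contraTneq hu => ->; rewrite lform0 unitr0.
- by rewrite kerproj_pivot // raddf0.
Qed.

Lemma slice_weight_parallel n (phi : 'I_n.+1 -> L) i t c :
  ~~ transversal phi c.2 ->
  oweight (slice phi i t c) =
    if lform phi c.1 == t then weight (map (col' i) c.2) else 0%N.
Proof. by rewrite /slice => /negbTE -> /=; case: ifP. Qed.

Lemma slice_weight_pair n (phi : 'I_n.+1 -> L) i t0 t1 c : t0 != t1 ->
  (oweight (slice phi i t0 c) + oweight (slice phi i t1 c) <= weight c.2)%N.
Proof.
move=> t01; case hg: (transversal phi c.2).
  have := slice_weight_transversal i t0 hg; have := slice_weight_transversal i t1 hg.
  by lia.
have wc := weight_map c.2 (raddf0 (col' i)).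
rewrite !slice_weight_parallel ?hg //; case: eqP => [e|_]; last by case: ifP.
by rewrite -e in t01; rewrite (negbTE t01) addn0.
Qed.

Lemma slice_weight_origin n (phi : 'I_n.+1 -> L) i t (g : seq (vec n.+1)) : t != 0 ->
  (oweight (slice phi i t (0%R, g)) * 2 <= weight g)%N.
Proof.
move=> t0; case hg: (transversal phi g); first exact: slice_weight_transversal.
by rewrite slice_weight_parallel ?hg //= lform0 eq_sym (negbTE t0).
Qed.

Lemma slice_avoid n (phi : 'I_n.+1 -> L) i t cs w : phi i \is a GRing.unit ->
  (forall c', c' \in pmap (slice phi i t) cs -> ~ spanned c'.2 (w - c'.1)) ->
  forall c, c \in cs -> ~ spanned c.2 (level_point phi i t + kernel_lift phi i w - c.1).
Proof.
move=> hu hw c hc /(slice_spec hu) [c' e]; apply: hw.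
by rewrite mem_pmap -e map_f.
Qed.

Lemma avoid_affine_subspaces n (cs : seq (vec n * seq (vec n))) :
  (\sum_(c <- cs) weight c.2 < 2 ^ n)%N ->
  exists w, forall c, c \in cs -> ~ spanned c.2 (w - c.1).
Proof.
elim: n cs => [|n IH] cs.
  case: cs => [_|c cs]; first by exists 0.
  by rewrite big_cons /weight expn0 ltnS leqn0 addn_eq0 expn_eq0.
pose e : 'I_n.+1 -> L := fun j => (j == ord0)%:R.
have hu : e ord0 \is a GRing.unit by rewrite /e eqxx unitr1.
move=> hcs; suff [t /IH [w hw]] :
    exists t, (\sum_(c <- pmap (slice e ord0 t) cs) weight c.2 < 2 ^ n)%N.
  by exists (level_point e ord0 t + kernel_lift e ord0 w); apply: slice_avoid.
have : (\sum_(c <- pmap (slice e ord0 0) cs) weight c.2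
        + \sum_(c <- pmap (slice e ord0 1) cs) weight c.2 <= \sum_(c <- cs) weight c.2)%N.
  rewrite !sum_weight_pmap -big_split /=; apply: leq_sum => c _.
  by apply: slice_weight_pair; rewrite eq_sym oner_neq0.
move: hcs; rewrite expnS; set S := (\sum_(c <- cs) _)%N.
set S0 := (\sum_(c <- pmap _ _) _)%N; set S1 := (\sum_(c <- pmap _ _) _)%N.
by case: (ltnP S0 (2 ^ n)) => [|h0]; [exists 0 | exists 1; lia].
Qed.

Lemma exists_annihilating_form n (h : seq (vec n)) : (size h < n)%N ->
  exists phi : 'I_n -> L, (exists i, phi i != 0) /\ {in h, forall x, lform phi x = 0}.
Proof.
elim: n h => [|n IH] h hs; first by rewrite ltn0 in hs.
pose e : 'I_n.+1 -> L := fun j => (j == ord0)%:R.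
have lform_e x : lform e x = x 0 ord0.
  rewrite (lform_split _ ord0) /e eqxx mulr1 big1 ?addr0 // => j _.
  by rewrite eq_sym (negbTE (neq_lift _ _)) mulr0.
have [hg|hg] := boolP (transversal e h); last first.
  exists e; split; first by exists ord0; rewrite /e eqxx oner_neq0.
  by move=> x hx; apply/eqP; apply: contraNT hg => hx0; apply/hasP; exists x.
have [uh hu] := pivotP hg; set u := pivot e h in uh hu.
have [|phi' [[i' hi'] hphi']] := IH [seq col' ord0 (kerproj e u x) | x <- rem u h].
  have h0 : (0 < size h)%N by case: (h) uh.
  by rewrite size_map size_rem // -ltnS prednK.
pose c := - (lform e u)^-1 * lform phi' (col' ord0 u).
pose phi : 'I_n.+1 -> L := fun j => if unlift ord0 j is Some j' then phi' j' else c.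
have lform_phi x : lform phi x = x 0 ord0 * c + lform phi' (col' ord0 x).
  rewrite (lform_split _ ord0) /phi unlift_none; congr (_ + _).
  by apply: eq_bigr => j _; rewrite liftK mxE.
exists phi; split; first by exists (lift ord0 i'); rewrite /phi liftK.
have phi_u : lform phi u = 0.
  by rewrite lform_phi -lform_e /c mulrA mulrN mulrV // mulN1r addNr.
move=> x hx; case: (eqVneq x u) => [-> //|xu].
have -> : x = kerproj e u x + (lform e x * (lform e u)^-1) *: u by rewrite subrK.
rewrite lformD lformZ phi_u mulr0 addr0 lform_phi -lform_e lform_kerproj // mul0r add0r.
by apply: hphi'; apply: map_f; apply: rem_mem.
Qed.

Lemma avoid_subspaces n (h : seq (vec n)) (gs : seq (seq (vec n))) :
  (size h < n)%N -> (\sum_(g <- gs) weight g < 2 ^ n)%N ->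
  exists v, ~ spanned h v /\ forall g, g \in gs -> ~ spanned g v.
Proof.
case: n h gs => [|n] h gs hs hgs; first by rewrite ltn0 in hs.
have [phi [[i hi] hphi]] := exists_annihilating_form hs.
have hu := HL hi.
pose cs := [seq (0 : vec n.+1, g) | g <- gs].
have [w hw] : exists w,
    forall c, c \in pmap (slice phi i 1) cs -> ~ spanned c.2 (w - c.1).
  apply: avoid_affine_subspaces.
  have : ((\sum_(c <- pmap (slice phi i 1) cs) weight c.2) * 2
          <= \sum_(g <- gs) weight g)%N.
    rewrite sum_weight_pmap big_map big_distrl /=; apply: leq_sum => g _.
    exact: slice_weight_origin (oner_neq0 L).
  move: hgs; rewrite expnS; set S := (\sum_(g <- gs) _)%N.
  by set S1 := (\sum_(c <- _) _)%N; lia.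
exists (level_point phi i 1 + kernel_lift phi i w); split.
  move=> /(lform_spanned hphi).
  rewrite lformD lform_level_point // lform_kernel_lift // addr0.
  by apply/eqP; apply: oner_neq0.
move=> g hg; rewrite -[_ + _]subr0; apply: (slice_avoid hu hw (c := (0, g))).
by apply: map_f.
Qed.

Definition indep_mod n m (s : seq (vec n)) (c : 'I_m -> vec n) :=
  forall d : 'I_m -> L, spanned s (\sum_(l < m) d l *: c l) -> forall l, d l = 0.

Lemma exists_indep_mod n (F0 : seq (vec n)) (Fs : seq (seq (vec n))) m :
  (forall j, (j < m)%N ->
     (size F0 + j < n)%N /\ (\sum_(f <- Fs) 2 ^ (size f + j) < 2 ^ n)%N) ->
  exists c : 'I_m -> vec n, forall f, f \in F0 :: Fs -> indep_mod f c.
Proof.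
elim: m => [|m IH] hyp; first by exists (fun _ => 0) => f _ d _ [].
have [c hc] := IH (fun j hj => hyp j (ltnW hj)).
have [h1 h2] := hyp m (ltnSn m).
pose cs := map c (index_enum 'I_m).
have hcs : size cs = m by rewrite size_map size_index_enum_ord.
have [v [hv0 hvs]] : exists v, ~ spanned (F0 ++ cs) v /\
    forall g, g \in [seq f ++ cs | f <- Fs] -> ~ spanned g v.
  apply: avoid_subspaces; first by rewrite size_cat hcs.
  apply: leq_ltn_trans h2; rewrite big_map; apply: leq_sum => f _.
  by rewrite /weight leq_exp2l // -hcs -size_cat count_size.
have hv f : f \in F0 :: Fs -> ~ spanned (f ++ cs) v.
  by rewrite inE => /predU1P [-> //|hf]; apply/hvs/map_f.
exists (fun l => if unlift ord0 l is Some l' then c l' else v) => f hf d.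
rewrite big_ord_recl unlift_none; under eq_bigr do rewrite liftK.
set y := \sum_(i < m) _ => hs.
have d0 : d ord0 = 0.
  case: (eqVneq (d ord0) 0) => // /HL hu; case: (hv f hf).
  have -> : v = (d ord0)^-1 *: (d ord0 *: v + y) + (- (d ord0)^-1) *: y.
    by rewrite scalerDr scalerA mulVr // scale1r scaleNr addrK.
  by apply: spanned_cat; apply: spannedZ => //; apply: spanned_sum.
move: hs; rewrite d0 scale0r add0r => /(hc f hf) hd l.
by case: (unliftP ord0 l) => [l' ->|->].
Qed.

End SkewLinearAlgebra.

Unset Implicit Arguments.

Theorem lemma3p1 (L : unitRingType) (HL : skew_field L) (a b : nat)
  (ha : (2 <= a)%N) (hb : (b < a)%N)
  (B B1 B2 B3 : 'rV[L]_(a.+1) -> Prop) (k1 k2 k3 : nat)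
  (hB : vsub_of_dim B b.+1)
  (hB1 : vsub_of_dim B1 k1) (hk1 : (k1 <= b)%N)
  (hB2 : vsub_of_dim B2 k2) (hk2 : (k2 <= b)%N)
  (hB3 : vsub_of_dim B3 k3) (hk3 : (k3 <= b.-1)%N) :
  exists C : 'rV[L]_(a.+1) -> Prop,
    vsub_of_dim C (a - b)%N /\
    (forall v, C v -> (B v \/ B1 v \/ B2 v \/ B3 v) -> v = 0).
Proof.
case: hB => [f0 [_ e0]]; case: hB1 => [f1 [_ e1]].
case: hB2 => [f2 [_ e2]]; case: hB3 => [f3 [_ e3]].
pose vecs k (f : 'I_k -> 'rV[L]_a.+1) := map f (index_enum 'I_k).
have [|c hc] := @exists_indep_mod L HL a.+1
    (vecs _ f0) [:: vecs _ f1; vecs _ f2; vecs _ f3] (a - b).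
  move=> j hj; rewrite !big_cons big_nil !size_map !size_index_enum_ord; split; first lia.
  have := exp2_budget hk1 hj; have := exp2_budget hk2 hj.
  have := exp2_budget (leq_trans hk3 (leq_pred b)) hj; lia.
exists (in_span c); split.
  exists c; split=> // d hd; apply: (hc _ (mem_head _ _)).
  by rewrite hd; apply: spanned0.
move=> _ [d ->] hv; rewrite big1 // => l _.
suff -> : d l = 0 by rewrite scale0r.
have hd f : f \in [:: vecs _ f0; vecs _ f1; vecs _ f2; vecs _ f3] ->
    spanned f (\sum_(l < a - b) d l *: c l) -> d l = 0.
  by move=> hf hs; apply: hc hf d hs l.
case: hv => [/e0|[/e1|[/e2|/e3]]] /in_span_spanned /hd; apply;
  by rewrite !inE eqxx ?orbT.
Qed.
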